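(* Let $(X,\mathcal A,m)$ be a probability space and $\mathcal B$ a Banach space continuously embedded in $L^1(X,m)$ and containing the constants. Let $L_\epsilon$, $\epsilon\in V$ ($V$ a neighbourhood of $0$), be Markov operators on $\mathcal B$ such that for each $\epsilon$, $1$ is a simple eigenvalue of $L_\epsilon$ with eigenfunction $h_\epsilon$ normalized by $\int h_\epsilon\,dm=1$. Suppose: (1) $\epsilon\mapsto L_\epsilon h_0\in\mathcal B$ is differentiable at $\epsilon=0$; (2) $\epsilon\mapsto L_\epsilon\phi\in\mathcal B$ is continuous at $\epsilon=0$ for every $\phi\in\mathcal B$; (3) there exist $\theta\in(0,1)$ and $C>0$, independent of $\epsilon$, such that $\|L_\epsilon^n\phi\|_{\mathcal B}\le C\theta^n\|\phi\|_{\mathcal B}$ for all $\phi\in\mathcal B_0$ and $n\ge1$. Then $h_\epsilon$ is differentiable at $\epsilon=0$ as an element of $\mathcal B$, and $\partial_\epsilon h_\epsilon|_{\epsilon=0}=(I-L_0)^{-1}\partial_\epsilon L_\epsilon h_0|_{\epsilon=0}$.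
   Context: $\mathcal B_0=\{\phi\in\mathcal B:\int\phi\,dm=0\}$; $(I-L_0)^{-1}$ is the inverse of $I-L_0$ on $\mathcal B_0$. A Markov operator is a positive linear operator preserving the integral with respect to $m$. *)

From HB Require Import structures.
From mathcomp Require Import all_boot all_order all_algebra.
From mathcomp Require Import all_classical all_reals all_analysis.
Set Implicit Arguments. Unset Strict Implicit. Unset Printing Implicit Defensive.
Import Order.TTheory GRing.Theory Num.Theory.
Import numFieldNormedType.Exports.
Local Open Scope classical_set_scope.
Local Open Scope ring_scope.

(* [emb] : B -> (X -> R) realises a Banach space B continuously embedded in
   L^1(X,m) and containing the constants. *)
Definition L1_embedding (d : measure_display) (X : measurableType d)
  (R : realType) (m : probability X R) (B : completeNormedModType R)
  (emb : B -> X -> R) : Prop :=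
  (forall (a : R) (u v : B) (x : X), emb (a *: u + v) x = a * emb u x + emb v x)
  /\ (forall u : B, {ae m, forall x, emb u x = 0} -> u = 0)
  /\ (forall u : B, m.-integrable setT (fun x => (emb u x)%:E))
  /\ (exists K : R, forall u : B,
        (\int[m]_x (`|emb u x|)%:E <= (K * `|u|)%:E)%E)
  /\ (exists one : B, forall x, emb one x = 1).

Definition Bint (d : measure_display) (X : measurableType d)
  (R : realType) (m : probability X R) (B : completeNormedModType R)
  (emb : B -> X -> R) (u : B) : \bar R :=
  (\int[m]_x (emb u x)%:E)%E.

Definition markov_op (d : measure_display) (X : measurableType d)
  (R : realType) (m : probability X R) (B : completeNormedModType R)
  (emb : B -> X -> R) (L : B -> B) : Prop :=
  (forall (a : R) (u v : B), L (a *: u + v) = a *: L u + L v)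
  /\ continuous L
  /\ (forall u : B, {ae m, forall x, 0 <= emb u x} ->
                    {ae m, forall x, 0 <= emb (L u) x})
  /\ (forall u : B, Bint m emb (L u) = Bint m emb u).

From HB Require Import structures.
From mathcomp Require Import all_boot all_order all_algebra.
From mathcomp Require Import all_classical all_reals all_analysis.
From mathcomp Require Import lra.
Set Implicit Arguments. Unset Strict Implicit. Unset Printing Implicit Defensive.
Import Order.TTheory GRing.Theory Num.Theory.
Import numFieldNormedType.Exports.
Local Open Scope classical_set_scope.
Local Open Scope ring_scope.

(* Let g be the derivative of e |-> L_e h_0 at 0, and v the solution in B_0
   of v - L_0 v = g given by the Neumann series of L_0 on B_0.  Since
   L_t h_t = h_t, the difference quotient q_t = (h_t - h_0)/t satisfies
     (I - L_t)(q_t - v) = ((L_t h_0 - L_0 h_0)/t - g) + (L_t v - L_0 v),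
   whose right-hand side tends to 0 by (1) and (2).  Because q_t - v has zero
   mean and the decay (3) is uniform in t, choosing N with C theta^N <= 1/2
   and telescoping N steps gives |w| <= 2 N max(1, C) |w - L_t w| on B_0 for
   all small t, hence q_t -> v. *)

Section IntegralFunctional.
Context (d : measure_display) (X : measurableType d) (R : realType)
  (m : probability X R) (B : completeNormedModType R) (emb : B -> X -> R).
Hypothesis emb_L1 : L1_embedding m emb.

Definition Bintr (u : B) : R := fine (Bint m emb u).

Lemma BintE u : Bint m emb u = (Bintr u)%:E.
Proof.
case: emb_L1 => _ [_ [emb_int _]].
by rewrite /Bintr fineK //; exact: integrable_fin_num.
Qed.

Lemma Bintr_linear : linear Bintr.
Proof.
case: emb_L1 => emb_lin [_ [emb_int _]] a u v.
apply: EFin_inj; rewrite -BintE /Bint.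
under eq_integral do rewrite emb_lin EFinD EFinM.
rewrite integralD //; last exact: integrableZl.
by rewrite integralZl // -!/(Bint m emb _) !BintE.
Qed.

HB.instance Definition _ := GRing.isLinear.Build R B R *:%R Bintr Bintr_linear.

Lemma continuous_Bintr : continuous Bintr.
Proof.
case: emb_L1 => _ [_ [emb_int [[K int_norm_le] _]]].
apply/linear_bounded_continuous/linear_boundedP.
near=> r => u.
have : (`|Bint m emb u| <= (K * `|u|)%:E)%E.
  exact/(le_trans _ (int_norm_le u))/le_abse_integral/measurable_int/emb_int.
rewrite BintE lee_fin => /le_trans; apply; apply: ler_wpM2r => //.
Unshelve. all: by end_near. Qed.

Definition B0 : set B := [set u | Bintr u = 0].

Lemma closed_B0 : closed B0.
Proof.
have := @preimage_closed _ _ Bintr [set x | x = 0].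
apply; last exact: closed_eq.
by move=> u _; exact: continuous_Bintr.
Qed.

Lemma B0E u : (Bint m emb u = 0%E) = B0 u.
Proof. by rewrite BintE; apply/propext; split => [[]|/= ->]. Qed.

Lemma B0_0 : B0 0.
Proof. by rewrite /B0 /= linear0. Qed.

Lemma B0D u v : B0 u -> B0 v -> B0 (u + v).
Proof. by rewrite /B0 /= linearD /= => -> ->; rewrite addr0. Qed.

Lemma B0B u v : B0 u -> B0 v -> B0 (u - v).
Proof. by rewrite /B0 /= linearB /= => -> ->; rewrite subr0. Qed.

Lemma B0_scale_sub a u v : Bintr u = Bintr v -> B0 (a *: (u - v)).
Proof. by rewrite /B0 /= linearZ linearB /= => ->; rewrite subrr scaler0. Qed.

Lemma Bintr_markov L : markov_op m emb L -> forall u, Bintr (L u) = Bintr u.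
Proof. by case=> _ [_ [_ int_L]] u; apply: EFin_inj; rewrite -!BintE int_L. Qed.

Lemma B0_markov L : markov_op m emb L -> forall u, B0 u -> B0 (L u).
Proof. by move=> /Bintr_markov L_int u; rewrite /B0 /= L_int. Qed.

End IntegralFunctional.

Lemma exists_mulr_expr_le (R : realType) (C theta e : R) :
  `|theta| < 1 -> 0 < e -> exists2 N : nat, (0 < N)%N & C * theta ^+ N <= e.
Proof.
move=> theta_lt1 e_gt0.
have : C * theta ^+ n @[n --> \oo] --> 0.
  by rewrite -(mulr0 C); apply: cvgM; [exact: cvg_cst | exact: cvg_expr].
move=> /cvgr0_norm_le /(_ e e_gt0) [N _ small].
by exists N.+1 => //; apply: le_trans (ler_norm _) (small _ (leqnSn N)).
Qed.

Section GeometricDecay.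
Variables (R : realType) (B : normedModType R) (L : B -> B) (P : set B)
  (C theta : R).
Hypothesis L_lin : linear L.
HB.instance Definition _ := GRing.isLinear.Build R B B *:%R L L_lin.
Hypothesis theta01 : 0 < theta < 1.
Hypothesis decay : forall u, P u -> forall n, (1 <= n)%N ->
  `|iter n L u| <= C * theta ^+ n * `|u|.

Lemma iter_linear n : linear (iter n L).
Proof. by elim: n => [//|n IH] a u v /=; rewrite IH linearP. Qed.

HB.instance Definition _ n :=
  GRing.isLinear.Build R B B *:%R (iter n L) (iter_linear n).

Lemma norm_iter_le_geometric u n : P u ->
  `|iter n L u| <= geometric (Num.max 1 C * `|u|) theta n.
Proof.
case/andP: theta01 => /ltW theta_ge0 _ Pu; rewrite /geometric /=.
case: n => [|n]; first by rewrite expr0 mulr1 ler_peMl // le_max lexx.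
apply: le_trans (decay (n := n.+1) Pu isT) _.
rewrite mulrAC ler_wpM2r ?exprn_ge0 //.
by rewrite ler_wpM2r // le_max lexx orbT.
Qed.

Lemma sub_iter_telescope w n :
  w - iter n L w = \sum_(k < n) iter k L (w - L w).
Proof.
elim: n => [|n IH]; first by rewrite big_ord0 subrr.
by rewrite big_ord_recr /= -IH linearB /= -iterSr iterS addrA subrK.
Qed.

Lemma resolvent_bound N w : (0 < N)%N -> C * theta ^+ N <= 2^-1 ->
  P w -> P (w - L w) -> `|w| <= 2 * N%:R * Num.max 1 C * `|w - L w|.
Proof.
case/andP: theta01 => /ltW theta_ge0 /ltW theta_le1 N_gt0 CthetaN Pw Pf.
have telescope_le : `|w - iter N L w| <= N%:R * (Num.max 1 C * `|w - L w|).
  rewrite sub_iter_telescope mulr_natl -[X in _ *+ X](card_ord N) -sumr_const.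
  apply: le_trans (ler_norm_sum _ _ _) (ler_sum _ _) => k _.
  apply: le_trans (norm_iter_le_geometric k Pf) _.
  by rewrite /geometric /= ler_piMr ?exprn_ile1 // mulr_ge0 // le_max ler01.
have iterN_le : `|iter N L w| <= 2^-1 * `|w|.
  exact: le_trans (decay Pw N_gt0) (ler_wpM2r _ CthetaN).
have := ler_normD (w - iter N L w) (iter N L w); rewrite subrK -!mulrA.
move: telescope_le iterN_le; set a := N%:R * _; lra.
Qed.

End GeometricDecay.

Section NeumannSeries.
Variables (R : realType) (B : completeNormedModType R) (L : B -> B)
  (P : set B) (C theta : R).
Hypothesis L_lin : linear L.
HB.instance Definition _ := GRing.isLinear.Build R B B *:%R L L_lin.
Hypothesis L_cont : continuous L.
Hypotheses (P_closed : closed P) (P0 : P 0).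
Hypothesis PD : forall u v, P u -> P v -> P (u + v).
Hypothesis PL : forall u, P u -> P (L u).
Hypothesis theta01 : 0 < theta < 1.
Hypothesis decay : forall u, P u -> forall n, (1 <= n)%N ->
  `|iter n L u| <= C * theta ^+ n * `|u|.

Lemma neumann_seriesS g n :
  series (fun k => iter k L g) n.+1 = g + L (series (fun k => iter k L g) n).
Proof.
elim: n => [|n IH].
  by rewrite seriesEord /= big_ord1 big_ord0 linear0 addr0.
by rewrite [in RHS]seriesSr linearD seriesSr IH addrA.
Qed.

Lemma is_cvg_neumann_series g : P g -> cvgn (series (fun k => iter k L g)).
Proof.
move=> Pg; apply: normed_cvg.
case/andP: theta01 => /ltW theta_ge0 theta_lt1.
apply: (series_le_cvg _ _ (fun n => norm_iter_le_geometric theta01 decay n Pg)).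
- by move=> n.
- by move=> n; rewrite geometric_ge0 // mulr_ge0 // le_max ler01.
- by apply: is_cvg_geometric_series; rewrite ger0_norm.
Qed.

Lemma neumann_solution g : P g -> exists2 v, P v & v - L v = g.
Proof.
move=> Pg; have S_cvg := is_cvg_neumann_series Pg.
set S := series _ in S_cvg; set v := limn S.
have S_v : S @ \oo --> v := S_cvg.
have v_fix : v = g + L v.
  have S_shift_v : (fun n => S n.+1) @ \oo --> v by rewrite (cvg_shiftS S).
  have S_shift_Lv : (fun n => S n.+1) @ \oo --> g + L v.
    rewrite /S (funext (neumann_seriesS g)).
    by apply: cvgD; [exact: cvg_cst | exact: continuous_cvg (@L_cont v) S_v].
  exact: cvg_unique S_shift_v S_shift_Lv.
exists v; last by rewrite {1}v_fix addrK.
apply: (@closed_cvg _ _ _ _ S P P_closed _ v S_v); apply: nearW.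
elim=> [|n IH]; first by rewrite /S seriesEord /= big_ord0.
by rewrite /S seriesSr; apply: PD IH _; elim: n => //= n /PL.
Qed.

End NeumannSeries.

Section DifferenceQuotient.
Variables (R : realType) (V : normedModType R).

Lemma difference_quotient1E (f : R -> V) a :
  (fun t => t^-1 *: ((f \o shift a) (t *: 1) - f a)) =
  (fun t => t^-1 *: (f (t + a) - f a)).
Proof. by apply/funext => t /=; rewrite [t%:A]mulr1. Qed.

Lemma derive1_cvg (f : R -> V) a : derivable f a 1 ->
  (fun t => t^-1 *: (f (t + a) - f a)) @ 0^' --> 'D_1 f a.
Proof. by rewrite /derivable /derive difference_quotient1E. Qed.

Lemma cvg_derive1 (f : R -> V) a l :
  (fun t => t^-1 *: (f (t + a) - f a)) @ 0^' --> l ->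
  derivable f a 1 /\ 'D_1 f a = l.
Proof.
move=> f_l; have f_cvg : derivable f a 1.
  by rewrite /derivable difference_quotient1E; exact: cvgP f_l.
by split; last exact: cvg_unique (derive1_cvg f_cvg) f_l.
Qed.

End DifferenceQuotient.

Section FixedPointQuotient.
Variables (R : fieldType) (B : lmodType R) (K L0 : B -> B).
Hypothesis K_lin : linear K.
HB.instance Definition _ := GRing.isLinear.Build R B B *:%R K K_lin.

Lemma sub_linear_sub x y : (x - y) - K (x - y) = (x - K x) - (y - K y).
Proof. by rewrite linearB !opprB addrACA [RHS]addrACA [- K x + _]addrC. Qed.

Lemma fixed_point_quotient_resolvent (t : R) (h0 ht v : B) :
  K ht = ht -> L0 h0 = h0 ->
  (t^-1 *: (ht - h0) - v) - K (t^-1 *: (ht - h0) - v) =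
  t^-1 *: (K h0 - L0 h0) - (v - L0 v) + (K v - L0 v).
Proof.
move=> Kht L0h0; rewrite sub_linear_sub L0h0.
have -> : t^-1 *: (ht - h0) - K (t^-1 *: (ht - h0)) = t^-1 *: (K h0 - h0).
  by rewrite linearZ (linearB K) /= Kht -scalerBr opprB addrC subrKA.
by rewrite -[v - K v](subrKA (L0 v)) opprD [- (L0 v - _)]opprB addrA.
Qed.

End FixedPointQuotient.

Section FixedPointDerivative.
Variables (R : realType) (B : normedModType R) (L : R -> B -> B) (h : R -> B)
  (P : set B) (v : B) (M : R).
Hypothesis L_lin : \forall t \near 0, linear (L t).
Hypothesis h_fixed : \forall t \near 0, L t (h t) = h t.
Hypothesis Lh0_quotient :
  t^-1 *: (L t (h 0) - L 0 (h 0)) @[t --> 0^'] --> v - L 0 v.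
Hypothesis Lv_cont : {for 0, continuous (fun t => L t v)}.
Hypothesis resolvent_le :
  \forall t \near 0, forall w, P w -> `|w| <= M * `|w - L t w|.
Hypothesis P_quotient : \forall t \near 0^', P (t^-1 *: (h t - h 0) - v).

Lemma fixed_point_quotient_cvg : t^-1 *: (h t - h 0) @[t --> 0^'] --> v.
Proof.
pose r t := t^-1 *: (L t (h 0) - L 0 (h 0)) - (v - L 0 v) + (L t v - L 0 v).
have r_cvg0 : r t @[t --> 0^'] --> 0.
  rewrite /r -[X in _ --> X](addr0 0).
  apply: cvgD; apply/subr_cvg0; last exact: cvg_within_filter.
  exact: Lh0_quotient.
apply/subr_cvg0/norm_cvg0P.
apply: (@squeeze_cvgr _ _ _ _ (cst 0) (fun t => M * `|r t|)).
- near=> t; rewrite normr_ge0 /=.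
  have Lt_lin : linear (L t) by near: t; exact: nbhs_dnbhs L_lin.
  have ht_fixed : L t (h t) = h t by near: t; exact: nbhs_dnbhs h_fixed.
  rewrite /r -(fixed_point_quotient_resolvent Lt_lin t v ht_fixed); last first.
    exact: nbhs_singleton h_fixed.
  have Pq : P (t^-1 *: (h t - h 0) - v) by near: t; exact: P_quotient.
  suff Lt_resolvent_le : forall w, P w -> `|w| <= M * `|w - L t w|.
    exact: Lt_resolvent_le Pq.
  by near: t; exact: nbhs_dnbhs resolvent_le.
- exact: cvg_cst.
- rewrite -[X in _ --> X](mulr0 M); apply: cvgM; first exact: cvg_cst.
  exact/norm_cvg0P.
Unshelve. all: by end_near. Qed.

End FixedPointDerivative.

Theorem proposition6p2 (d : measure_display) (X : measurableType d)
  (R : realType) (m : probability X R) (B : completeNormedModType R)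
  (emb : B -> X -> R) (V : set R) (L : R -> B -> B) (h : R -> B)
  (theta C : R) :
  L1_embedding m emb ->
  V \in nbhs (0 : R) ->
  (forall e, V e -> markov_op m emb (L e)) ->
  (* 1 is a simple eigenvalue of L e with eigenfunction h e, int h e = 1 *)
  (forall e, V e -> L e (h e) = h e) ->
  (forall e, V e -> forall u : B, L e u = u -> exists c : R, u = c *: h e) ->
  (forall e, V e -> Bint m emb (h e) = 1%E) ->
  (* (1) *)
  derivable (fun e => L e (h 0)) 0 1 ->
  (* (2) *)
  (forall u : B, {for 0, continuous (fun e => L e u)}) ->
  (* (3) *)
  0 < theta < 1 -> 0 < C ->
  (forall e, V e -> forall u : B, Bint m emb u = 0%E -> forall n : nat,
     (1 <= n)%N -> `|iter n (L e) u| <= C * theta ^+ n * `|u|) ->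
  (* conclusion: h differentiable at 0, derivative = (I - L_0)^{-1} of the
     derivative of e |-> L e h_0, the inverse taken on B_0 *)
  derivable h 0 1 /\
  Bint m emb ('D_1 h 0) = 0%E /\
  'D_1 h 0 - L 0 ('D_1 h 0) = 'D_1 (fun e => L e (h 0)) 0.
Proof.
move=> emb_L1 /[!inE] V0 markov h_fixed _ h_int dLh0 L_cont theta01 C_gt0 decay.
have V_0 : V 0 := nbhs_singleton V0.
have V_near0 : \forall t \near 0^', V t := nbhs_dnbhs V0.
have L_lin e : V e -> linear (L e) by case/markov.
have B0_L e (Ve : V e) := B0_markov emb_L1 (markov e Ve).
have decay_B0 e : V e -> forall u, B0 m emb u -> forall n, (0 < n)%N ->
    `|iter n (L e) u| <= C * theta ^+ n * `|u|.
  by move=> Ve u; rewrite -(B0E emb_L1); exact: decay.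
have [N N_gt0 CthetaN] : exists2 N : nat, (0 < N)%N & C * theta ^+ N <= 2^-1.
  by case/andP: theta01 => theta_gt0 theta_lt1; apply: exists_mulr_expr_le;
    rewrite ?ger0_norm ?ltW.
set g := 'D_1 (fun e => L e (h 0)) 0.
have dLh0_cvg : t^-1 *: (L t (h 0) - L 0 (h 0)) @[t --> 0^'] --> g.
  by have := derive1_cvg dLh0; under eq_fun do rewrite addr0.
have B0_g : B0 m emb g.
  apply: (@closed_cvg _ _ _ _ _ _ (closed_B0 emb_L1) _ _ dLh0_cvg).
  apply: filterS V_near0 => t Vt; apply: (B0_scale_sub emb_L1).
  by rewrite !(Bintr_markov emb_L1 (markov _ _)).
have L0_cont : continuous (L 0) by case: (markov 0 V_0) => _ [].
have [v B0_v v_sol] := neumann_solution (L_lin 0 V_0) L0_cont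
  (closed_B0 emb_L1) (B0_0 emb_L1) (B0D emb_L1) (B0_L 0 V_0) theta01
  (decay_B0 0 V_0) B0_g.
have h_quotient : t^-1 *: (h t - h 0) @[t --> 0^'] --> v.
  apply: (@fixed_point_quotient_cvg _ _ L h (B0 m emb) v
    (2 * N%:R * Num.max 1 C)).
  - exact: filterS L_lin V0.
  - exact: filterS h_fixed V0.
  - by rewrite v_sol.
  - exact: L_cont.
  - apply: filterS V0 => t Vt w B0_w.
    apply: (resolvent_bound (L_lin t Vt) theta01 (decay_B0 t Vt)) => //.
    by apply: (B0B emb_L1 B0_w); exact: B0_L.
  - apply: filterS V_near0 => t Vt; apply: (B0B emb_L1 _ B0_v).
    apply: (B0_scale_sub emb_L1); apply: EFin_inj.
    by rewrite -!(BintE emb_L1) !h_int.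
have [h_der ->] : derivable h 0 1 /\ 'D_1 h 0 = v.
  by apply: cvg_derive1; under eq_fun do rewrite addr0.
by rewrite (B0E emb_L1).
Qed.
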